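(* Let $\{z_n\}$ be generated by the process $\mathcal{S}(\kappa,\Phi)$ of Theorem 6 ($\kappa$ with $\sum_n\rho^{\kappa(n)}=\infty$ for all $0<\rho\le1$; $\Phi$ the non-modal count with respect to $K$-nearest neighbors, $K\ge2$). Let $Q_n=\{x\in X:\Phi(x,Z_n)>0\}$ and $Q=\limsup_n Q_n$ (points lying in infinitely many $Q_n$). If $X$ is separable and the set of $f$-boundary points has $\mu$-measure zero, then with probability one $\mu(Q)=0$.
   Context: $(X,d)$ metric space with probability measure $\mu$; $Y$ countable; $f:X\to Y$; $X_y=f^{-1}(y)$; $B_\epsilon(x)$ open ball; $\operatorname{supp}(\mu)=\{x:\mu(B_\epsilon(x))>0\ \forall\epsilon>0\}$. $b$ is an $f$-boundary point iff $\mu(B_\epsilon(b)\setminus X_{f(b)})>0$ for all $\epsilon>0$. $\operatorname{modefreq}_f(A)=\max_y|A\cap X_y|$. $V_S(x)=\emptyset$ if $x\in S$; otherwise $V_S(x)$ is a $K$-element subset of $S$ minimizing distance to $x$, chosen among such subsets to minimize $\operatorname{modefreq}_f$. $\Phi(x,S)=|V_S(x)|-\operatorname{modefreq}_f(V_S(x))$. Process $\mathcal{S}(\kappa,\Phi)$: $Z_0=\emptyset$; at step $n$ draw $\kappa(n)$ candidates i.i.d. from $\mu$, independent of the past; $z_n$ maximizes $\Phi(\cdot,Z_{n-1})$ over candidates (ties uniformly at random); $Z_n=\{z_1,\dots,z_n\}$. *)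

From HB Require Import structures.
From mathcomp Require Import all_boot all_order all_algebra.
From mathcomp Require Import all_classical all_reals all_analysis.
Unset Printing Implicit Defensive.
Import Order.TTheory GRing.Theory Num.Theory.
Local Open Scope classical_set_scope.
Local Open Scope ring_scope.

Section Defs.
Context {R : realType} {X : pointedType} {Y : countType}.

Definition is_metric (d : X -> X -> R) : Prop :=
  [/\ forall x y, 0 <= d x y,
      forall x y, d x y = 0 <-> x = y,
      forall x y, d x y = d y x &
      forall x y z, d x z <= d x y + d y z].

Definition oball (d : X -> X -> R) (x : X) (eps : R) : set X :=
  [set y | d x y < eps].

Definition metric_open (d : X -> X -> R) : set (set X) :=
  [set O | forall x, O x -> exists2 eps : R, 0 < eps & oball d x eps `<=` O].

Definition borelX (d : X -> X -> R) := g_sigma_algebraType (metric_open d).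

Definition separable (d : X -> X -> R) : Prop :=
  exists D : set X, countable D /\
    forall x (eps : R), 0 < eps -> exists2 q, D q & d x q < eps.

Definition f_boundary (d : X -> X -> R) (mu : set (borelX d) -> \bar R)
  (f : X -> Y) (b : X) : Prop :=
  forall eps : R, 0 < eps ->
    (0 < mu (oball d b eps `\` (f @^-1` [set f b])))%E.

(* modefreq_f(A) = max_y |A /\ X_y|, A given as a duplicate-free list *)
Definition modefreq (f : X -> Y) (A : seq X) : nat :=
  \max_(y <- map f A) count (fun a => f a == y) A.

Definition knn_set (d : X -> X -> R) (K : nat) (S : seq X) (x : X)
  (V : seq X) : Prop :=
  [/\ uniq V, {subset V <= S}, size V = minn K (size (undup S)) &
      forall v w, v \in V -> w \in S -> w \notin V -> d x v <= d x w].

Definition VS (d : X -> X -> R) (f : X -> Y) (K : nat) (S : seq X) (x : X)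
  : seq X :=
  if x \in S then [::]
  else xget [::] [set V | knn_set d K S x V /\
                    forall W, knn_set d K S x W -> (modefreq f V <= modefreq f W)%N].

Definition Phi (d : X -> X -> R) (f : X -> Y) (K : nat) (x : X) (S : seq X)
  : nat := (size (VS d f K S x) - modefreq f (VS d f K S x))%N.

(* one step of the process: among the candidates cs, keep the maximizers of
   Phi(.,Z) and pick one of them using u (uniform in [0,1]) *)
Definition select (d : X -> X -> R) (f : X -> Y) (K : nat) (Z : seq X)
  (cs : seq X) (u : R) : X :=
  let m := \max_(c <- cs) Phi d f K c Z in
  let M := [seq c <- cs | Phi d f K c Z == m] in
  nth point M (Num.truncn (u * (size M)%:R) %% size M).

(* Z_n as the list [z_1; ...; z_n]; step n uses candidates cand n 0 .. cand n (kappa n - 1)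
   and tie-breaker U n *)
Fixpoint Zseq (d : X -> X -> R) (f : X -> Y) (K : nat) (kappa : nat -> nat)
  {T : Type} (cand : nat -> nat -> T -> X) (U : nat -> T -> R) (n : nat) (w : T)
  : seq X :=
  match n with
  | 0 => [::]
  | n'.+1 => let Z := Zseq d f K kappa cand U n' w in
             rcons Z (select d f K Z [seq cand n'.+1 i w | i <- iota 0 (kappa n'.+1)]
                        (U n'.+1 w))
  end.

End Defs.

Definition mutually_independent {dO} {O : measurableType dO} {R : realType}
  (P : probability O R) {J : eqType} (valid : J -> Prop) (gen : J -> set (set O))
  : Prop :=
  forall (F : seq J) (E : J -> set O), uniq F ->
    (forall j, j \in F -> valid j /\ gen j (E j)) ->
    P (\big[setI/setT]_(j <- F) E j) = (\prod_(j <- F) P (E j))%E.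

From HB Require Import structures.
From mathcomp Require Import all_boot all_order all_algebra.
From mathcomp Require Import all_classical all_reals all_analysis.
From mathcomp Require Import lra.
Import Order.TTheory GRing.Theory Num.Theory.
Local Open Scope classical_set_scope.
Local Open Scope ring_scope.

Set Implicit Arguments.
Unset Strict Implicit.

(* Whatever the selection rule, every point of Z_n is a candidate.  Almost
   surely the candidates avoid a fixed mu-null set N, and, since
   sum_n rho^kappa(n) diverges for rho = mu(B) > 0, some step draws all its
   candidates inside B (the probability that none of the steps 1..M does is
   prod_n (1 - rho^kappa(n)), which tends to 0); by separability this is needed
   only for the countably many balls with centres in a dense sequence and
   radii 1/(k+1).  For such an outcome and x outside N and off the f-boundary,
   a small ball around x minus the fibre of f(x) is null, hence inside N and
   avoided by every Z_n, while balls shrinking to x keep being hit.  So some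
   Z_n contains K points arbitrarily close to x, all labelled f(x), and from
   then on every K-nearest-neighbour set of x is pure: Phi(x, Z_n) = 0. *)

Section NonModalCount.
Context {R : realType} {X : pointedType} {Y : countType}.
Variables (d : X -> X -> R) (f : X -> Y) (K : nat).

Lemma Phi_mem x S : x \in S -> Phi d f K x S = 0%N.
Proof. by move=> xS; rewrite /Phi /VS xS. Qed.

Lemma modefreq_const (V : seq X) y :
  {in V, forall v, f v = y} -> (size V <= modefreq f V)%N.
Proof.
case: V => [//|v V] fV; rewrite /modefreq.
apply: leq_trans (leq_bigmax_seq _ (map_f f (mem_head v V)) _) => //.
rewrite (@eq_in_count _ _ xpredT) ?count_predT // => a aV /=.
by rewrite (fV a aV) (fV v (mem_head v V)); apply/eqP.
Qed.

(* The K points of [L] force every K-nearest-neighbour set of [x] into the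
   ball of radius [r]. *)
Lemma Phi_eq0_of_near_labels x S r L :
  x \notin S -> uniq L -> size L = K -> {subset L <= S} ->
  (forall l, l \in L -> d x l < r) ->
  (forall z, z \in S -> d x z < r -> f z = f x) -> Phi d f K x S = 0%N.
Proof.
move=> xS uL sL LS Lr Sf; rewrite /Phi /VS (negbTE xS).
set P := [set V | _].
have [[V0 PV0]|noV] := pselect (exists V, P V); last first.
  by rewrite xgetPN //= => V PV; apply: noV; exists V.
case: (xgetPex [::] (ex_intro _ V0 PV0)) => -[uW WS sW Wd] _.
set W := xget _ _ in uW WS sW Wd *.
apply/eqP; rewrite subn_eq0; apply: (@modefreq_const _ (f x)) => v vW.
have KS : (K <= size (undup S))%N.
  by rewrite -sL uniq_leq_size // => l lL; rewrite mem_undup LS.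
have sWK : size W = K by rewrite sW; apply/minn_idPl.
apply: Sf; first exact: WS.
have [LW|/allPn[l lL lW]] := boolP (all (mem W) L).
  have [_ eqLW] := uniq_min_size uL (allP LW) (eq_leq (etrans sWK (esym sL))).
  by apply: Lr; rewrite eqLW.
exact: le_lt_trans (Wd v l vW (LS l lL) lW) (Lr l lL).
Qed.

End NonModalCount.

Lemma bigsetI_seqP {I : choiceType} {O : Type} (s : seq I) (E : I -> set O) w :
  (\big[setI/setT]_(j <- s) E j) w <-> {in s, forall j, E j w}.
Proof. by rewrite -bigcap_seq. Qed.

Lemma prod_1subr_mul_1addr_sum_le1 {R : realFieldType} (s : seq R) :
  {in s, forall p, 0 <= p <= 1} ->
  (\prod_(p <- s) (1 - p)) * (1 + \sum_(p <- s) p) <= 1.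
Proof.
elim: s => [|p s IHs] s01; first by rewrite !big_nil mul1r addr0.
rewrite !big_cons; have /andP[p0 p1] := s01 p (mem_head p s).
have {}s01 : {in s, forall q, 0 <= q <= 1}.
  by move=> q qs; apply: s01; rewrite inE qs orbT.
have Pi0 : 0 <= \prod_(q <- s) (1 - q).
  by rewrite big_seq prodr_ge0 // => q /s01 /andP[_]; rewrite subr_ge0.
have S0 : 0 <= \sum_(q <- s) q by rewrite big_seq sumr_ge0 // => q /s01 /andP[].
have IH := IHs s01; set Pi := \prod_(q <- s) _ in IH Pi0 *.
set S := \sum_(q <- s) q in IH S0 *.
have : 0 <= p * Pi * S by rewrite !mulr_ge0.
have : 0 <= p * p * Pi by rewrite !mulr_ge0.
nra.
Qed.

Lemma nneseries_pinfty_partial_gt {R : realType} (u : nat -> R) :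
  (forall n, 0 <= u n) -> (\sum_(0 <= n <oo) (u n)%:E)%E = +oo%E ->
  forall c, exists M, c < \sum_(n <- iota 1 M) u n.
Proof.
move=> u0 uoo c.
have : (fun M => \sum_(0 <= n < M) (u n)%:E) @ \oo --> +oo%E.
  by rewrite -uoo; apply: is_cvg_nneseries => n _ _; rewrite lee_fin.
move=> /cvgey_gt /(_ (c + u 0%N)) [M _ /(_ M (leqnn M))].
rewrite /= sumEFin lte_fin => ltM; exists M.
have : \sum_(0 <= n < M) u n <= \sum_(0 <= n < M.+1) u n.
  by rewrite big_nat_recr //= lerDl.
suff -> : \sum_(0 <= n < M.+1) u n = u 0%N + \sum_(n <- iota 1 M) u n by lra.
by rewrite /index_iota subn0 big_cons.
Qed.

Lemma divergent_prod_1subr_lt {R : realType} (p : nat -> R) :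
  (forall n, 0 <= p n <= 1) -> (\sum_(0 <= n <oo) (p n)%:E)%E = +oo%E ->
  forall r, 0 < r -> exists M, \prod_(n <- iota 1 M) (1 - p n) < r.
Proof.
move=> p01 poo r r0.
have [M ltM] := nneseries_pinfty_partial_gt (fun n => proj1 (andP (p01 n))) poo r^-1.
exists M; have S0 : 0 <= \sum_(n <- iota 1 M) p n.
  by rewrite sumr_ge0 // => n _; case/andP: (p01 n).
have s01 : {in [seq p n | n <- iota 1 M], forall q, 0 <= q <= 1}.
  by move=> _ /mapP[n _ ->].
have := prod_1subr_mul_1addr_sum_le1 s01; rewrite !big_map.
rewrite -ler_pdivlMr ?ltr_wpDr // => /le_lt_trans; apply.
by rewrite ltr_pdivrMr ?ltr_wpDr // mulrC -ltr_pdivrMr // div1r ltr_wpDl.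
Qed.

Lemma negligible_countable_bigcup {d} {T : measurableType d} {R : realType}
    (mu : {measure set T -> \bar R}) {I : countType} (F : I -> set T) :
  (forall i, mu.-negligible (F i)) -> mu.-negligible (\bigcup_i F i).
Proof.
move=> Fneg; apply: (negligibleS (A := \bigcup_n oapp F set0 (unpickle n))).
  by move=> x [i _ Fix]; exists (pickle i); rewrite //= pickleK.
apply: negligible_bigcup => n.
by case: (unpickle n) => [i|] /=; [exact: Fneg | exact: negligible_set0].
Qed.

Lemma null_sets_cover {d} {T : measurableType d} {R : realType}
    (mu : {measure set T -> \bar R}) {I : countType} (F : I -> set T) :
  (forall i, measurable (F i)) ->
  exists N, [/\ measurable N, mu N = 0%E & forall i, mu (F i) = 0%E -> F i `<=` N].
Proof.
move=> mF; have [|N [mN muN sN]] := @negligible_countable_bigcup _ _ _ mu _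
    (fun i => [set x | F i x /\ mu (F i) = 0%E]).
  move=> i; have [Fi0|Fi0] := pselect (mu (F i) = 0%E); last first.
    by apply: (negligibleS _ (negligible_set0 _)) => x [].
  by apply: (negligibleS (A := F i)) => [x []|]; [|apply/negligibleP].
by exists N; split => // i Fi0 x Fix; apply: sN; exists i.
Qed.

Section CandidateSteps.
Context {R : realType} {dT : measure_display} {T : measurableType dT}
  {dO : measure_display} {O : measurableType dO}.
Variables (P : probability O R) (mu : probability T R) (kappa : nat -> nat)
  (cand : nat -> nat -> O -> T).
Hypothesis cand_law : forall n i, (1 <= n)%N -> (i < kappa n)%N ->
  measurable_fun setT (cand n i) /\
  forall A, measurable A -> P (cand n i @^-1` A) = mu A.
Hypothesis cand_indep : mutually_independent P
  (fun j => let: (n, i) := j in (1 <= n)%N /\ (i < kappa n)%N)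
  (fun j => let: (n, i) := j in [set cand n i @^-1` A | A in measurable]).

Lemma measurable_cand_preimage n i A : (1 <= n)%N -> (i < kappa n)%N ->
  measurable A -> measurable (cand n i @^-1` A).
Proof.
by move=> n1 ik mA; have [mc _] := cand_law n1 ik; rewrite -[_ @^-1` _]setTI; apply: mc.
Qed.

Lemma ae_cand_notin N : measurable N -> mu N = 0%E ->
  P.-negligible [set w | exists n i, [/\ (1 <= n)%N, (i < kappa n)%N & N (cand n i w)]].
Proof.
move=> mN muN; apply: (negligibleS (A := \bigcup_n \bigcup_i
  [set w | [/\ (1 <= n)%N, (i < kappa n)%N & N (cand n i w)]])).
  by move=> w [n [i Hi]]; exists n => //; exists i.
apply: negligible_bigcup => n; apply: negligible_bigcup => i.
have [[n1 ik]|nni] := pselect ((1 <= n)%N /\ (i < kappa n)%N); last first.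
  by apply: (negligibleS _ (negligible_set0 _)) => w [n1 ik _]; apply: nni.
apply: (negligibleS _ (A := cand n i @^-1` N)); first by move=> w [].
apply/negligibleP; first exact: measurable_cand_preimage.
exact: etrans (proj2 (cand_law n1 ik) _ mN) muN.
Qed.

Section HittingOneSet.
Variables (B : set T) (rho : R).
Hypotheses (mB : measurable B) (muB : mu B = rho%:E).

Definition step_in n := \big[setI/setT]_(i <- iota 0 (kappa n)) (cand n i @^-1` B).

Local Definition all_steps_in Ts := \big[setI/setT]_(n <- Ts) step_in n.
Local Definition no_step_in L := \big[setI/setT]_(n <- L) ~` step_in n.

Lemma measurable_step_in n : (1 <= n)%N -> measurable (step_in n).
Proof.
move=> n1; rewrite /step_in big_seq; apply: bigsetI_measurable => i.
by rewrite mem_iota => /andP[_ ik]; apply: measurable_cand_preimage.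
Qed.

Let measurable_steps Ts (E : nat -> set O) : all (leq 1) Ts ->
  (forall n, (1 <= n)%N -> measurable (E n)) ->
  measurable (\big[setI/setT]_(n <- Ts) E n).
Proof.
by move=> /allP Ts1 mE; rewrite big_seq; apply: bigsetI_measurable => n /Ts1 /mE.
Qed.

Lemma measure_all_steps_in Ts : uniq Ts -> all (leq 1) Ts ->
  P (all_steps_in Ts) = (\prod_(n <- Ts) rho ^+ kappa n)%:E.
Proof.
move=> uTs /allP Ts1; set F := [seq (n, i) | n <- Ts, i <- iota 0 (kappa n)].
have memF j : j \in F -> (1 <= j.1)%N /\ (j.2 < kappa j.1)%N.
  case/allpairsPdep => n [i [nTs]]; rewrite mem_iota => /andP[_ ik] ->.
  by split => //; apply: Ts1.
rewrite /all_steps_in /step_in.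
rewrite -(big_allpairs_dep (h := fun n i : nat => (n, i))
                          (F := fun j => cand j.1 j.2 @^-1` B)).
rewrite cand_indep; first last.
- by move=> [n i] /memF[n1 ik]; split => //; exists B.
- apply: allpairs_uniq_dep => // [n _|[n i] [m k] _ _ /= [-> ->]] //; exact: iota_uniq.
rewrite (eq_big_seq (fun _ => rho%:E)); last first.
  by move=> j /memF[n1 ik]; have [_ ->] := cand_law n1 ik.
rewrite prodEFin big_allpairs_dep; congr (_%:E); apply: eq_bigr => n _.
have -> : iota 0 (kappa n) = index_iota 0 (kappa n) by rewrite /index_iota subn0.
by rewrite prodr_const_nat subn0.
Qed.

Lemma measure_steps_in_notin L Ts : uniq (L ++ Ts) -> all (leq 1) (L ++ Ts) ->
  P (all_steps_in Ts `&` no_step_in L) =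
  ((\prod_(n <- Ts) rho ^+ kappa n) * \prod_(n <- L) (1 - rho ^+ kappa n))%:E.
Proof.
elim: L Ts => [|m L IHL] Ts.
  by move=> uTs Ts1; rewrite /no_step_in !big_nil setIT measure_all_steps_in // mulr1.
rewrite cat_cons /= => /andP[mLTs uLTs] /andP[m1 LTs1].
have uLmTs : uniq (L ++ m :: Ts) by rewrite -cat1s uniq_catCA cat1s /= mLTs.
have LmTs1 : all (leq 1) (L ++ m :: Ts) by move: LTs1; rewrite !all_cat /= m1.
have mE : measurable (all_steps_in Ts `&` no_step_in L).
  by move: LTs1; rewrite all_cat => /andP[? ?]; apply: measurableI;
     apply: measurable_steps => // n /measurable_step_in; [|exact: measurableC].
have -> : all_steps_in Ts `&` no_step_in (m :: L) =
    (all_steps_in Ts `&` no_step_in L) `\` step_in m.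
  by rewrite /no_step_in big_cons setDE (setIC (~` _)) setIA.
have mSm := measurable_step_in m1.
rewrite measureD ?(le_lt_trans (probability_le1 _ mE)) ?ltry //.
have -> : all_steps_in Ts `&` no_step_in L `&` step_in m =
    all_steps_in (m :: Ts) `&` no_step_in L.
  by rewrite /all_steps_in big_cons setIC setIA.
rewrite -[LHS]/(P (all_steps_in Ts `&` no_step_in L) -
                P (all_steps_in (m :: Ts) `&` no_step_in L))%E.
rewrite (IHL Ts) // (IHL (m :: Ts)) // -EFinB !big_cons; congr (_%:E).
by rewrite mulrBl mul1r mulrBr !mulrA [_ * rho ^+ _]mulrC.
Qed.

Lemma negligible_no_step_in : 0 < rho ->
  (\sum_(0 <= n <oo) (rho ^+ kappa n)%:E)%E = +oo%E ->
  P.-negligible [set w | ~ exists2 n, (1 <= n)%N &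
                           forall i, (i < kappa n)%N -> B (cand n i w)].
Proof.
move=> rho0 rhooo; have rho1 : rho <= 1 by rewrite -lee_fin -muB probability_le1.
have iota1 M : all (leq 1) (iota 1 M) by apply/allP => n; rewrite mem_iota => /andP[].
have mnot M : measurable (no_step_in (iota 1 M)).
  by apply: measurable_steps (iota1 M) _ => n /measurable_step_in /measurableC.
exists (\bigcap_M no_step_in (iota 1 M)); split.
- exact: bigcapT_measurable.
- apply/eqP; rewrite eq_le measure_ge0 andbT; apply/lee_addgt0Pr => e e0.
  have [|M ltM] := divergent_prod_1subr_lt _ rhooo e0.
    by move=> n; rewrite exprn_ge0 ?exprn_ile1 // ltW.
  apply: le_trans (_ : P (no_step_in (iota 1 M)) <= _)%E.
    by apply: le_measure; rewrite ?inE //; [exact: bigcapT_measurable|exact: bigcap_inf].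
  have := @measure_steps_in_notin (iota 1 M) [::]; rewrite cats0 iota_uniq iota1.
  rewrite /all_steps_in !big_nil setTI mul1r => -> //; rewrite add0e lee_fin ltW //.
- move=> w /= nohit M _; apply/bigsetI_seqP => n.
  rewrite mem_iota => /andP[n1 _] /bigsetI_seqP Sn; apply: nohit; exists n => // i ik.
  by apply: Sn; rewrite mem_iota.
Qed.

End HittingOneSet.

Lemma ae_hit_positive {I : countType} (B : I -> set T) :
  (forall j, measurable (B j)) ->
  (forall rho : R, 0 < rho <= 1 -> (\sum_(0 <= n <oo) (rho ^+ kappa n)%:E)%E = +oo%E) ->
  P.-negligible [set w | exists2 j, (0 < mu (B j))%E &
     ~ exists2 n, (1 <= n)%N & forall i, (i < kappa n)%N -> B j (cand n i w)].
Proof.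
move=> mB kappa_div; apply: (negligibleS (A := \bigcup_j [set w | (0 < mu (B j))%E /\
    ~ exists2 n, (1 <= n)%N & forall i, (i < kappa n)%N -> B j (cand n i w)])).
  by move=> w [j Bj nohit]; exists j.
apply: negligible_countable_bigcup => j.
have [Bj0|Bj0] := pselect (0 < mu (B j))%E; last first.
  by apply: (negligibleS _ (negligible_set0 _)) => w [].
apply: (negligibleS (A := [set w | ~ exists2 n, (1 <= n)%N &
  forall i, (i < kappa n)%N -> B j (cand n i w)])); first by move=> w [].
have Bjfin : mu (B j) \is a fin_num.
  by rewrite ge0_fin_numE ?measure_ge0 // (le_lt_trans (probability_le1 _ (mB j))) ?ltry.
have muB : mu (B j) = (fine (mu (B j)))%:E by rewrite fineK.
have rho0 : 0 < fine (mu (B j)) by rewrite -lte_fin -muB.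
have rho01 : 0 < fine (mu (B j)) <= 1 by rewrite rho0 -lee_fin -muB probability_le1.
exact: negligible_no_step_in (mB j) muB rho0 (kappa_div _ rho01).
Qed.

End CandidateSteps.

Section MetricBalls.
Context {R : realType} {X : pointedType}.
Variables (d : X -> X -> R).
Hypothesis d_metric : is_metric d.

Lemma oball_open x r : metric_open d (oball d x r).
Proof.
case: d_metric => _ _ _ dtri y dxy; exists (r - d x y); first by rewrite subr_gt0.
by move=> z dyz; apply: le_lt_trans (dtri x y z) _; rewrite /oball /= -ltrBrDl.
Qed.

Lemma measurable_oball x r : measurable (oball d x r : set (borelX d)).
Proof. by apply: sub_sigma_algebra; apply: oball_open. Qed.

Lemma separable_seq : separable d ->
  exists e : nat -> X, forall x eps, 0 < eps -> exists j, d x (e j) < eps.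
Proof.
case=> D [/pcard_surjP[e eD] Ddense]; exists e => x eps eps0.
by have [q /eD[j _ <-]] := Ddense x eps eps0; exists j.
Qed.

Variable e : nat -> X.
Hypothesis e_dense : forall x eps, 0 < eps -> exists j, d x (e j) < eps.

Definition qball j k := oball d (e j) k.+1%:R^-1.

Lemma qball_sub_oball x r : 0 < r ->
  exists j k, qball j k x /\ qball j k `<=` oball d x r.
Proof.
move=> r0; case: d_metric => _ _ dsym dtri.
have r20 : 0 < r / 2 by rewrite divr_gt0.
have [k _ /(_ k (leqnn k)) kr] := near_infty_natSinv_lt (PosNum r20).
have [j dxj] : exists j, d x (e j) < k.+1%:R^-1 by apply: e_dense; rewrite invr_gt0.
exists j, k; split; first by rewrite /qball /oball /= dsym.
move=> y dy; apply: le_lt_trans (dtri x (e j) y) _; rewrite [ltRHS]splitr.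
exact: ltrD (lt_trans dxj kr) (lt_trans dy kr).
Qed.

End MetricBalls.

Lemma not_f_boundary_null {R : realType} {X : pointedType} {Y : countType}
    (d : X -> X -> R) (mu : {measure set borelX d -> \bar R}) (f : X -> Y) x :
  is_metric d -> (forall y, measurable (f @^-1` [set y] : set (borelX d))) ->
  ~ f_boundary d mu f x ->
  exists2 eps, 0 < eps & forall A : set (borelX d), measurable A ->
    A `<=` oball d x eps -> mu (A `\` f @^-1` [set f x]) = 0%E.
Proof.
move=> dm fm /existsNP[eps /not_implyP[eps0 /negP]]; rewrite -leNgt => null_eps.
exists eps => // A mA Aeps; apply/eqP; rewrite eq_le measure_ge0 andbT.
apply: le_trans null_eps; apply: le_measure; rewrite ?inE.
- exact: measurableD mA (fm _).
- by apply: measurableD; [apply: measurable_oball | apply: fm].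
- by move=> z [Az nz]; split => //; apply: Aeps.
Qed.

Lemma has_eq_bigmax {I : eqType} (F : I -> nat) (s : seq I) : s != [::] ->
  has (fun i => F i == \max_(j <- s) F j) s.
Proof.
elim: s => [//|i s IHs] _; rewrite big_cons /=.
have [->|s0] := eqVneq s [::]; first by rewrite big_nil maxn0 eqxx.
by case: leqP => _; rewrite ?eqxx // IHs ?orbT.
Qed.

Section Process.
Context {R : realType} {X : pointedType} {Y : countType}.
Variables (d : X -> X -> R) (f : X -> Y) (K : nat) (kappa : nat -> nat).

Lemma select_mem Z cs (u : R) : cs != [::] -> select d f K Z cs u \in cs.
Proof.
move=> cs0; rewrite /select; set M := seq.filter _ cs.
have M0 : (0 < size M)%N by rewrite lt0n size_eq0 -has_filter has_eq_bigmax.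
have := mem_nth point (ltn_pmod (Num.truncn (u * (size M)%:R)) M0).
by rewrite mem_filter => /andP[].
Qed.

Context {T : Type}.
Variables (cand : nat -> nat -> T -> X) (U : nat -> T -> R).
Hypothesis kappa_gt0 : forall n, (1 <= n)%N -> (1 <= kappa n)%N.

Let Z := Zseq d f K kappa cand U.

Lemma ZseqS n w : exists2 i, (i < kappa n.+1)%N &
  Z n.+1 w = rcons (Z n w) (cand n.+1 i w).
Proof.
rewrite /Z /=; set cs := map _ _.
have cs0 : cs != [::] by rewrite -size_eq0 size_map size_iota -lt0n kappa_gt0.
have /mapP[i] := select_mem (Z n w) (U n.+1 w) cs0.
by rewrite mem_iota => /andP[_ ik] ->; exists i.
Qed.

Lemma Zseq_subset m n w : (m <= n)%N -> {subset Z m w <= Z n w}.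
Proof.
move=> /subnKC <-; elim: (n - m)%N => [|k IHk] z; first by rewrite addn0.
by move=> /IHk; rewrite addnS /Z /= mem_rcons inE orbC => ->.
Qed.

Lemma Zseq_step n w : (1 <= n)%N ->
  exists2 i, (i < kappa n)%N & cand n i w \in Z n w.
Proof.
case: n => // n _; have [i ik ->] := ZseqS n w.
by exists i; rewrite ?mem_rcons ?mem_head.
Qed.

Lemma Zseq_cand n w z : z \in Z n w ->
  exists m i, [/\ (1 <= m)%N, (i < kappa m)%N & z = cand m i w].
Proof.
elim: n => [//|n IHn]; have [i ik ->] := ZseqS n w.
by rewrite mem_rcons inE => /orP[/eqP ->|/IHn//]; exists n.+1, i.
Qed.

Section Accumulation.
Variables (mu : {measure set borelX d -> \bar R}) (w : T) (e : nat -> X) (N : set X).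
Hypothesis d_metric : is_metric d.
Hypothesis fibre_measurable : forall y, measurable (f @^-1` [set y] : set (borelX d)).
Hypothesis e_dense : forall x eps, 0 < eps -> exists j, d x (e j) < eps.
Hypothesis null_qball_sub : forall j k,
  mu (qball d e j k) = 0%E -> qball d e j k `<=` N.
Hypothesis null_off_label_sub : forall j k y,
  mu (qball d e j k `\` f @^-1` [set y]) = 0%E ->
  qball d e j k `\` f @^-1` [set y] `<=` N.
Hypothesis cand_notin : forall n i, (1 <= n)%N -> (i < kappa n)%N -> ~ N (cand n i w).
Hypothesis hit_qball : forall j k, (0 < mu (qball d e j k))%E ->
  exists2 n, (1 <= n)%N & forall i, (i < kappa n)%N -> qball d e j k (cand n i w).

Lemma Zseq_notin n z : z \in Z n w -> ~ N z.
Proof. by case/Zseq_cand => m [i [m1 ik ->]]; apply: cand_notin. Qed.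

Lemma Zseq_near x r : ~ N x -> 0 < r -> exists n z, z \in Z n w /\ d x z < r.
Proof.
move=> Nx r0; have [j [k [qx qsub]]] := qball_sub_oball d_metric e_dense x r0.
have [n n1 hit] : exists2 n, (1 <= n)%N &
    forall i, (i < kappa n)%N -> qball d e j k (cand n i w).
  apply: hit_qball; rewrite lt0e measure_ge0 andbT; apply/eqP => /null_qball_sub.
  by move=> /(_ x qx).
have [i ik iZ] := Zseq_step w n1.
by exists n, (cand n i w); split => //; apply/qsub/hit.
Qed.

(* The positive lower bound [s] on the distances forces each new point to be
   distinct from the previous ones. *)
Lemma Zseq_many_near x r c : ~ N x -> (forall n, x \notin Z n w) -> 0 < r ->
  exists n L, [/\ uniq L, size L = c, {subset L <= Z n w} &
                 forall l, l \in L -> d x l < r].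
Proof.
move=> Nx xZ r0.
suff [n [L [s [_ _ uL sL [LZ Ld]]]]] : exists n L (s : R),
    [/\ 0 < s, s <= r, uniq L, size L = c &
         {subset L <= Z n w} /\ forall l, l \in L -> s <= d x l < r].
  by exists n, L; split => // l /Ld /andP[].
elim: c => [|c [n [L [s [s0 sr uL sL [LZ Ld]]]]]]; first by exists 0%N, [::], r.
have [m [z [zm dz]]] := Zseq_near Nx s0.
have dz0 : 0 < d x z.
  case: d_metric => dpos deq _ _; rewrite lt0r dpos andbT; apply/eqP => /deq xz.
  by have := xZ m; rewrite xz zm.
exists (maxn n m), (z :: L), (d x z); split => //.
- exact: ltW (lt_le_trans dz sr).
- rewrite /= uL andbT; apply/negP => /Ld /andP[sz _].
  by have := lt_le_trans dz sz; rewrite ltxx.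
- by rewrite /= sL.
split=> l; rewrite inE => /predU1P[->|lL].
- exact: Zseq_subset (leq_maxr n m) _ zm.
- exact: Zseq_subset (leq_maxl n m) _ (LZ l lL).
- by rewrite lexx (lt_le_trans dz sr).
- have /andP[sl lr] := Ld l lL.
  by rewrite lr andbT ltW // (lt_le_trans dz sl).
Qed.

Lemma Phi_eventually_eq0 x : ~ N x -> ~ f_boundary d mu f x ->
  exists n0, forall n, (n0 <= n)%N -> Phi d f K x (Z n w) = 0%N.
Proof.
move=> Nx /(not_f_boundary_null d_metric fibre_measurable)[eps eps0 null_eps].
have [[n xZ]|xZ] := pselect (exists n, x \in Z n w).
  by exists n => m nm; apply/Phi_mem/(Zseq_subset nm).
have [j [k [qx qsub]]] := qball_sub_oball d_metric e_dense x eps0.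
have [r r0 rq] := oball_open d_metric qx.
have near_label m z : z \in Z m w -> d x z < r -> f z = f x.
  move=> zm dz; apply: contrapT => fzx; apply: (Zseq_notin zm).
  apply: (null_off_label_sub (null_eps _ (measurable_oball d_metric _ _) qsub)).
  by split; [exact: rq | exact: fzx].
have {}xZ n : x \notin Z n w by apply/negP => xn; apply: xZ; exists n.
have [n [L [uL sL LZ Lr]]] := Zseq_many_near K Nx xZ r0.
exists n => m nm; apply: Phi_eq0_of_near_labels (xZ m) uL sL _ Lr (near_label m).
by move=> l /LZ; apply: Zseq_subset.
Qed.

Lemma limsup_Phi_pos_sub :
  [set x | forall M, exists2 n, (M <= n)%N & (0 < Phi d f K x (Z n w))%N]
    `<=` N `|` f_boundary d mu f.
Proof.
move=> x Q_x; apply: contrapT.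
move=> /not_orP[Nx /(Phi_eventually_eq0 Nx)[n0 Phi0]].
by have [n n0n] := Q_x n0; rewrite Phi0.
Qed.

End Accumulation.
End Process.

Lemma mutually_independent_inl {dO} {O : measurableType dO} {R : realType}
    (P : probability O R) {J1 J2 : eqType} (valid : J1 + J2 -> Prop)
    (gen : J1 + J2 -> set (set O)) :
  mutually_independent P valid gen ->
  mutually_independent P (fun j => valid (inl j)) (fun j => gen (inl j)).
Proof.
move=> indep F E uF FE.
have := indep (map inl F) (fun j => if j is inl j1 then E j1 else setT).
rewrite !big_map; apply; first by rewrite map_inj_uniq // => ? ? [].
by move=> _ /mapP[j jF ->]; apply: FE.
Qed.

Theorem mainTheorem10 (R : realType) (X : pointedType) (Y : countType)
  (d : X -> X -> R) (mu : probability (borelX d) R) (f : X -> Y)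
  (K : nat) (kappa : nat -> nat)
  (dO : measure_display) (O : measurableType dO) (P : probability O R)
  (cand : nat -> nat -> O -> borelX d) (U : nat -> O -> R) :
  is_metric d ->
  (forall y : Y, measurable (f @^-1` [set y] : set (borelX d))) ->
  (2 <= K)%N ->
  (forall n, (1 <= n)%N -> (1 <= kappa n)%N) ->
  (forall rho : R, 0 < rho <= 1 ->
     (\sum_(0 <= n <oo) (rho ^+ kappa n)%:E)%E = +oo%E) ->
  (* candidates: measurable, with law mu *)
  (forall n i, (1 <= n)%N -> (i < kappa n)%N ->
     measurable_fun setT (cand n i) /\
     forall A : set (borelX d), measurable A -> P (cand n i @^-1` A) = mu A) ->
  (* tie-breakers: measurable, uniform on [0,1] *)
  (forall n, (1 <= n)%N ->
     measurable_fun setT (U n) /\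
     forall t : R, 0 <= t <= 1 -> P [set w | 0 <= U n w <= t] = t%:E) ->
  (* all candidates and tie-breakers are mutually independent *)
  mutually_independent P
    (fun j : (nat * nat + nat)%type => match j with
       | inl (n, i) => (1 <= n)%N /\ (i < kappa n)%N
       | inr n => (1 <= n)%N end)
    (fun j => match j with
       | inl (n, i) => [set cand n i @^-1` A | A in [set A : set (borelX d) | measurable A]]
       | inr n => [set U n @^-1` A | A in [set A : set R | measurable A]] end) ->
  separable d ->
  mu.-negligible (f_boundary d mu f) ->
  {ae P, forall w,
     mu.-negligible
       [set x : borelX d | forall N, exists2 n, (N <= n)%N &
          (0 < Phi d f K x (Zseq d f K kappa cand U n w))%N]}.
Proof.
move=> dm fm _ kappa_gt0 kappa_div cand_law _ /mutually_independent_inl cand_indep.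
case/separable_seq => // e e_dense bnd_null.
pose basic (t : nat * nat * option Y) : set (borelX d) :=
  let: (j, k, oy) := t in
  if oy is Some y then qball d e j k `\` f @^-1` [set y] else qball d e j k.
have [|N [mN muN null_sub]] := null_sets_cover mu (F := basic).
  move=> [[j k] [y|]]; last exact: measurable_oball.
  exact: measurableD (measurable_oball dm _ _) (fm y).
have mqball jk : measurable (qball d e jk.1 jk.2 : set (borelX d)).
  exact: measurable_oball.
apply: (negligibleS _ (negligibleU (ae_cand_notin cand_law mN muN)
                                   (ae_hit_positive cand_law cand_indep mqball kappa_div))).
move=> w /= Q_nonnull; apply: contrapT => /not_orP[no_bad_cand no_bad_hit].
apply: Q_nonnull; apply: (negligibleS (A := N `|` f_boundary d mu f)).
  apply: (limsup_Phi_pos_sub kappa_gt0 dm fm e_dense) => [j k|j k y|n i n1 ik Nc|j k qpos].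
  - exact: (null_sub (j, k, None)).
  - exact: (null_sub (j, k, Some y)).
  - by apply: no_bad_cand; exists n, i.
  - by apply: contrapT => nohit; apply: no_bad_hit; exists (j, k).
by apply: negligibleU => //; apply/negligibleP.
Qed.
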